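(* Let $d \geq 2$, $N, K \geq 1$ be integers, $\mathbf{y}_1,\ldots,\mathbf{y}_N \in \mathbb{R}^d$ with matrix $\mathbf{Y} = [\mathbf{y}_1,\ldots,\mathbf{y}_N] \in \mathbb{R}^{d\times N}$, and $\rho_k^{[i]} \geq 0$ with $\sum_{k=1}^K \rho_k^{[i]} = 1$ for each $i$. Put $\mathbf{A}_k = \sum_{i} \rho_k^{[i]}\mathbf{y}_i\mathbf{y}_i^\mathrm{T}$, $\gamma_k = \sum_i \rho_k^{[i]}$, and $\lambda_k = $ largest eigenvalue of $\mathbf{A}_k$. For $S \subseteq [K] = \{1,\ldots,K\}$ define \[ \sigma^2(S) = \frac{\|\mathbf{Y}\|_\mathrm{F}^2 - \sum_{k\in S}\lambda_k}{dN - \sum_{k\in S}\gamma_k},\qquad g(S) = \Big[dN - \sum_{k\in S}\gamma_k\Big]\ln \sigma^2(S) + \sum_{k\in S}\gamma_k \ln\frac{\lambda_k}{\gamma_k}, \] and assume that $\gamma_k > 0$, $\lambda_k > 0$ for all $k$ and $\sigma^2(S) > 0$ for all $S \subseteq [K]$. If $S \subseteq [K]$ and $j \in S$ satisfy $\sigma^2(S) \leq \lambda_j/\gamma_j$, then $g(S) \leq g(S \setminus \{j\})$.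
   Context: $\|\cdot\|_\mathrm{F}$ is the Frobenius norm; $\ln$ is the natural logarithm. *)

From HB Require Import structures.
From mathcomp Require Import all_boot all_order all_algebra.
From mathcomp Require Import all_classical all_reals all_analysis.
Set Implicit Arguments. Unset Strict Implicit. Unset Printing Implicit Defensive.
Import Order.TTheory GRing.Theory Num.Theory.
Local Open Scope ring_scope.

Definition frob2 (R : realType) (d N : nat) (Y : 'M[R]_(d, N)) : R :=
  \sum_(a < d) \sum_(b < N) Y a b ^+ 2.

Definition Amat (R : realType) (d N K : nat) (Y : 'M[R]_(d, N))
  (rho : 'I_N -> 'I_K -> R) (k : 'I_K) : 'M[R]_d :=
  \sum_(i < N) rho i k *: (col i Y *m (col i Y)^T).

Definition gam (R : realType) (N K : nat) (rho : 'I_N -> 'I_K -> R)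
  (k : 'I_K) : R := \sum_(i < N) rho i k.

Definition is_largest_eigenvalue (R : realType) (d : nat) (A : 'M[R]_d) (l : R) : Prop :=
  eigenvalue A l /\ (forall a : R, eigenvalue A a -> a <= l).

Definition sigma2 (R : realType) (d N K : nat) (Y : 'M[R]_(d, N))
  (gamma lam : 'I_K -> R) (S : {set 'I_K}) : R :=
  (frob2 Y - \sum_(k in S) lam k) / ((d * N)%:R - \sum_(k in S) gamma k).

Definition gfun (R : realType) (d N K : nat) (Y : 'M[R]_(d, N))
  (gamma lam : 'I_K -> R) (S : {set 'I_K}) : R :=
  ((d * N)%:R - \sum_(k in S) gamma k) * ln (sigma2 Y gamma lam S)
  + \sum_(k in S) gamma k * ln (lam k / gamma k).

From HB Require Import structures.
From mathcomp Require Import all_boot all_order all_algebra.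
From mathcomp Require Import all_classical all_reals all_analysis.
From mathcomp Require Import ring lra.
Set Implicit Arguments.
Unset Strict Implicit.
Unset Printing Implicit Defensive.
Import Order.TTheory GRing.Theory Num.Theory.
Local Open Scope ring_scope.

(* Removing j from S merges the term D ln (F / D), where F / D = sigma2 S,
   with the term g ln (l / g) of j (g = gamma_j, l = lambda_j) into
   (D + g) ln ((F + l) / (D + g)).  By concavity of ln (the two-term log-sum
   inequality) the merged term is the larger one. *)

Lemma ln_le_subr1 (R : realType) (x : R) : 0 < x -> ln x <= x - 1.
Proof.
move=> x_gt0; have := @le_ln1Dx R (x - 1).
by rewrite addrCA subrr addr0; apply; lra.
Qed.

Lemma log_sum_inequality (R : realType) (a b c e : R) :
  0 < a -> 0 < b -> 0 < c -> 0 < e ->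
  a * ln (b / a) + c * ln (e / c) <= (a + c) * ln ((b + e) / (a + c)).
Proof.
move=> a_gt0 b_gt0 c_gt0 e_gt0.
set m := (b + e) / (a + c).
have m_gt0 : 0 < m by rewrite divr_gt0 // addr_gt0.
have lnE (x : R) : 0 < x -> ln x = ln m + ln (x / m).
  by move=> x_gt0; rewrite ln_div ?posrE // addrCA subrr addr0.
rewrite [ln (b / a)]lnE ?divr_gt0 // [ln (e / c)]lnE ?divr_gt0 //.
have le_ab : a * ln (b / a / m) <= a * (b / a / m - 1).
  by rewrite ler_pM2l // ln_le_subr1 // divr_gt0 // divr_gt0.
have le_ce : c * ln (e / c / m) <= c * (e / c / m - 1).
  by rewrite ler_pM2l // ln_le_subr1 // divr_gt0 // divr_gt0.
have balance : a * (b / a / m - 1) + c * (e / c / m - 1) = 0.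
  by rewrite /m; field; rewrite !gt_eqF ?addr_gt0.
lra.
Qed.

Section SplitGfun.
Variables (R : realType) (d N K : nat) (Y : 'M[R]_(d, N)).
Variables (gamma lam : 'I_K -> R).

Definition sigma2_den (S : {set 'I_K}) : R :=
  (d * N)%:R - \sum_(k in S) gamma k.
Definition sigma2_num (S : {set 'I_K}) : R := frob2 Y - \sum_(k in S) lam k.

Lemma sigma2_den_setD1 (S : {set 'I_K}) j : j \in S ->
  sigma2_den (S :\ j) = sigma2_den S + gamma j.
Proof. by move=> jS; rewrite /sigma2_den (big_setD1 _ jS) /=; ring. Qed.

Lemma sigma2_num_setD1 (S : {set 'I_K}) j : j \in S ->
  sigma2_num (S :\ j) = sigma2_num S + lam j.
Proof. by move=> jS; rewrite /sigma2_num (big_setD1 _ jS) /=; ring. Qed.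

Lemma gfun_le_setD1 (S : {set 'I_K}) j : j \in S ->
  0 < sigma2_den S -> 0 < sigma2_num S -> 0 < gamma j -> 0 < lam j ->
  gfun Y gamma lam S <= gfun Y gamma lam (S :\ j).
Proof.
move=> jS den_gt0 num_gt0 gamma_gt0 lam_gt0.
have := log_sum_inequality den_gt0 num_gt0 gamma_gt0 lam_gt0.
rewrite -sigma2_den_setD1 // -sigma2_num_setD1 // => merge.
rewrite /gfun /sigma2 -/(sigma2_den S) -/(sigma2_num S).
rewrite -/(sigma2_den (S :\ j)) -/(sigma2_num (S :\ j)) (big_setD1 _ jS) /=.
by rewrite addrA lerD2r.
Qed.

End SplitGfun.

Lemma sum_gam (R : realType) (N K : nat) (rho : 'I_N -> 'I_K -> R) :
  (forall i, \sum_(k < K) rho i k = 1) -> \sum_(k < K) gam rho k = N%:R.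
Proof.
move=> rho1; rewrite /gam exchange_big /= (eq_bigr (fun=> 1)) //.
by rewrite sumr_const card_ord.
Qed.

Lemma sigma2_den_gt0 (R : realType) (d N K : nat) (rho : 'I_N -> 'I_K -> R)
    (S : {set 'I_K}) :
  (2 <= d)%N -> (1 <= N)%N -> (forall i, \sum_(k < K) rho i k = 1) ->
  (forall k, 0 <= gam rho k) -> 0 < sigma2_den d N (gam rho) S.
Proof.
move=> d_ge2 N_ge1 rho1 gam_ge0.
have le_N : \sum_(k in S) gam rho k <= N%:R.
  rewrite -(sum_gam rho1) [leRHS](bigID (mem S)) /= lerDl.
  exact: sumr_ge0.
have le_dN : (2 * N)%:R <= (d * N)%:R :> R.
  by rewrite ler_nat leq_mul2r d_ge2 orbT.
have N_ge1' : 1 <= N%:R :> R by rewrite ler1n.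
rewrite natrM in le_dN; rewrite /sigma2_den; lra.
Qed.

Theorem lemma3 (R : realType) (d N K : nat) (hd : (2 <= d)%N) (hN : (1 <= N)%N)
  (hK : (1 <= K)%N) (Y : 'M[R]_(d, N)) (rho : 'I_N -> 'I_K -> R)
  (lam : 'I_K -> R)
  (hrho0 : forall i k, 0 <= rho i k)
  (hrho1 : forall i, \sum_(k < K) rho i k = 1)
  (hlam : forall k, is_largest_eigenvalue (Amat Y rho k) (lam k))
  (hgam_pos : forall k, 0 < gam rho k)
  (hlam_pos : forall k, 0 < lam k)
  (hsig_pos : forall S : {set 'I_K}, 0 < sigma2 Y (gam rho) lam S)
  (S : {set 'I_K}) (j : 'I_K) (hj : j \in S)
  (hS : sigma2 Y (gam rho) lam S <= lam j / gam rho j) :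
  gfun Y (gam rho) lam S <= gfun Y (gam rho) lam (S :\ j).
Proof.
have den_gt0 : 0 < sigma2_den d N (gam rho) S.
  by apply: sigma2_den_gt0 => // k; exact: ltW.
have num_gt0 : 0 < sigma2_num Y lam S.
  by have := mulr_gt0 (hsig_pos S) den_gt0; rewrite /sigma2 divfK ?gt_eqF.
exact: gfun_le_setD1.
Qed.
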